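(* For every $m\geq 2$, the Heisenberg Lie algebra $H(m)$ is not $2$-capable.
   Context: All Lie algebras are over a fixed field. The Heisenberg Lie algebra $H(m)$ is the Lie algebra of dimension $2m+1$ with $H(m)^2=Z(H(m))$ and $\dim H(m)^2=1$. A Lie algebra $L$ is $2$-capable if $L\cong H/Z_2(H)$ for some Lie algebra $H$, where $Z_2(H)$ is the second term of the upper central series of $H$. *)

From HB Require Import structures.
From mathcomp Require Import all_boot all_order all_algebra.
Set Implicit Arguments. Unset Strict Implicit. Unset Printing Implicit Defensive.
Import GRing.Theory.
Local Open Scope ring_scope.

Definition is_lie (F : fieldType) (V : lmodType F) (br : V -> V -> V) : Prop :=
  [/\ (forall (a : F) (x y z : V), br (a *: x + y) z = a *: br x z + br y z),
      (forall (a : F) (x y z : V), br z (a *: x + y) = a *: br z x + br z y),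
      (forall x : V, br x x = 0) &
      (forall x y z : V, br x (br y z) + br y (br z x) + br z (br x y) = 0)].

Definition lie_hom (F : fieldType) (V W : lmodType F)
  (brV : V -> V -> V) (brW : W -> W -> W) (f : V -> W) : Prop :=
  [/\ (forall (a : F) (x y : V), f (a *: x + y) = a *: f x + f y) &
      (forall x y : V, f (brV x y) = brW (f x) (f y))].

Definition in_center (F : fieldType) (V : lmodType F) (br : V -> V -> V) (x : V) : Prop :=
  forall y : V, br x y = 0.

Definition in_center2 (F : fieldType) (V : lmodType F) (br : V -> V -> V) (x : V) : Prop :=
  forall y : V, in_center br (br x y).

(* Derived algebra L^2 = [L,L] of a finite-dimensional Lie algebra: the span of
   all brackets, i.e. of the brackets of basis vectors. *)
Definition derived (F : fieldType) (L : vectType F) (br : L -> L -> L) : {vspace L} :=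
  <<[seq br u v | u <- (vbasis (fullv : {vspace L}) : seq L),
                  v <- (vbasis (fullv : {vspace L}) : seq L)]>>%VS.

Definition is_heisenberg (F : fieldType) (L : vectType F) (br : L -> L -> L) (m : nat) : Prop :=
  [/\ is_lie br,
      \dim (fullv : {vspace L}) = (2 * m + 1)%N,
      (forall x : L, x \in derived br <-> in_center br x) &
      \dim (derived br) = 1%N].

(* L is 2-capable: L ≅ H / Z_2(H) for some Lie algebra H, expressed (first
   isomorphism theorem) as a surjective Lie homomorphism H -> L with kernel Z_2(H). *)
Definition two_capable (F : fieldType) (L : vectType F) (br : L -> L -> L) : Prop :=
  exists (H : lmodType F) (brH : H -> H -> H) (f : H -> L),
    [/\ is_lie brH, lie_hom brH br f, (forall y : L, exists x : H, f x = y) &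
        (forall x : H, f x = 0 <-> in_center2 brH x)].

From HB Require Import structures.
From mathcomp Require Import all_boot all_order all_algebra sesquilinear zify.
From Stdlib Require Import Classical.
Set Implicit Arguments. Unset Strict Implicit. Unset Printing Implicit Defensive.
Import GRing.Theory.
Local Open Scope ring_scope.

(* Let f : H -> L be surjective with kernel Z_2(H), and suppose [x1, y1] = [x2, y2]
   in L with L = C_L(x1, y1) + C_L(x2, y2).  For lifts a_i, b_i of x_i, y_i the
   element [a1, b1] lies in Z_2(H): on a lift k of C_L(x_i, y_i) both [a_i, k] and
   [b_i, k] lie in Z_2(H), so [[a_i, b_i], k] is central by the Jacobi identity,
   while [a1, b1] - [a2, b2] lies in the kernel.  Hence [x1, y1] = 0.
   In a Heisenberg algebra of dimension at least 5 such pairs exist with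
   [x1, y1] = [x2, y2] = z != 0: take a hyperbolic pair (x1, y1), and a second one
   inside its centralizer, which is not contained in the centre for dimension
   reasons. *)

Definition in_centralizer (F : fieldType) (V : lmodType F) (br : V -> V -> V)
    (x y u : V) : Prop :=
  br x u = 0 /\ br y u = 0.

Definition centralizers_cover (F : fieldType) (V : lmodType F) (br : V -> V -> V)
    (x1 y1 x2 y2 : V) : Prop :=
  forall u, exists u1 u2,
    [/\ u = u1 + u2, in_centralizer br x1 y1 u1 & in_centralizer br x2 y2 u2].

Lemma lie_bilinear (F : fieldType) (V : lmodType F) (br : V -> V -> V) :
  is_lie br -> bilinear_for *:%R *:%R br.
Proof. by case=> linl linr _ _; split=> u a x y; [apply: linl | apply: linr]. Qed.

Section LieAlgebra.
Variables (F : fieldType) (V : lmodType F) (br : V -> V -> V).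
Hypothesis br_lie : is_lie br.

HB.instance Definition _ :=
  bilinear_isBilinear.Build F V V V *:%R *:%R br (lie_bilinear br_lie).

Lemma brxx x : br x x = 0. Proof. by case: br_lie. Qed.

Lemma brC x y : br x y = - br y x.
Proof.
apply/eqP; rewrite -addr_eq0.
by have := brxx (x + y); rewrite linearDl !linearDr /= !brxx add0r addr0 => ->.
Qed.

Lemma in_centerD a b : in_center br a -> in_center br b -> in_center br (a + b).
Proof. by move=> ca cb y; rewrite linearDl /= ca cb addr0. Qed.

Lemma in_centerN a : in_center br a -> in_center br (- a).
Proof. by move=> ca y; rewrite linearNl /= ca oppr0. Qed.

Lemma in_center2_brr e k : in_center2 br e -> in_center br (br k e).
Proof. by move=> ce; rewrite brC; apply/in_centerN/ce. Qed.

Lemma in_center_br_br a b k :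
  in_center2 br (br a k) -> in_center2 br (br b k) -> in_center br (br (br a b) k).
Proof.
case: br_lie => _ _ _ jacobi cak cbk.
have -> : br (br a b) k = br a (br b k) - br b (br a k).
  rewrite brC; have := jacobi k a b.
  by rewrite (brC k a) linearNr /= -addrA addrC => /eqP; rewrite addr_eq0 => /eqP.
by apply: in_centerD; [|apply: in_centerN]; apply: in_center2_brr.
Qed.

Lemma br_centralizer_lincomb x y w a b :
  in_centralizer br x y w -> br w (a *: x + b *: y) = 0.
Proof.
by case=> xw yw; rewrite linearDr !linearZr /= (brC w x) (brC w y) xw yw
                   oppr0 !scaler0 addr0.
Qed.

End LieAlgebra.

Section SecondCenterQuotient.
Variables (F : fieldType) (H : lmodType F) (brH : H -> H -> H).
Variables (L : lmodType F) (br : L -> L -> L) (f : H -> L).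
Hypotheses (brH_lie : is_lie brH) (f_hom : lie_hom brH br f).
Hypothesis f_surj : forall y : L, exists x : H, f x = y.
Hypothesis ker_f : forall x : H, f x = 0 -> in_center2 brH x.

Let f_linear : linear f. Proof. by case: f_hom. Qed.

HB.instance Definition _ := GRing.isLinear.Build F H L *:%R f f_linear.
HB.instance Definition _ :=
  bilinear_isBilinear.Build F H H H *:%R *:%R brH (lie_bilinear brH_lie).

Let f_br a b : f (brH a b) = br (f a) (f b). Proof. by case: f_hom. Qed.

Lemma in_center_br_lift a b k :
  br (f a) (f k) = 0 -> br (f b) (f k) = 0 -> in_center brH (brH (brH a b) k).
Proof. by rewrite -!f_br => /ker_f ak /ker_f bk; apply: (in_center_br_br brH_lie). Qed.

Lemma br_lift_in_center2 a1 b1 a2 b2 :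
  br (f a1) (f b1) = br (f a2) (f b2) ->
  centralizers_cover br (f a1) (f b1) (f a2) (f b2) ->
  in_center2 brH (brH a1 b1).
Proof.
move=> eq_br cover k.
have [u1 [u2 [fk [[a1u1 b1u1] [a2u2 b2u2]]]]] := cover (f k).
have [k1 fk1] := f_surj u1; have [k2 fk2] := f_surj u2; subst u1 u2.
have [e ker_e ->] : exists2 e, f e = 0 & k = k1 + k2 + e.
  by exists (k - (k1 + k2)); [rewrite raddfB raddfD /= fk subrr | rewrite addrC subrK].
rewrite !linearDr /=; apply: (in_centerD brH_lie) => //; last first.
  by apply: (in_center2_brr brH_lie); apply: ker_f.
apply: (in_centerD brH_lie) => //; first exact: in_center_br_lift.
have ker_d : f (brH a1 b1 - brH a2 b2) = 0 by rewrite raddfB /= !f_br eq_br subrr.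
rewrite -(subrK (brH a2 b2) (brH a1 b1)) linearDl /=.
by apply: (in_centerD brH_lie) => //; [apply: ker_f | apply: in_center_br_lift].
Qed.

End SecondCenterQuotient.

Lemma two_capable_br_eq0 (F : fieldType) (L : vectType F) (br : L -> L -> L)
    (x1 y1 x2 y2 : L) :
  two_capable br -> br x1 y1 = br x2 y2 -> centralizers_cover br x1 y1 x2 y2 ->
  br x1 y1 = 0.
Proof.
case=> H [brH [f [brH_lie f_hom f_surj ker_f]]].
have [[a1 <-] [b1 <-]] := (f_surj x1, f_surj y1).
have [[a2 <-] [b2 <-]] := (f_surj x2, f_surj y2).
move=> eq_br cover.
have ker_Z2 x : f x = 0 -> in_center2 brH x by move/ker_f.
have /ker_f := br_lift_in_center2 brH_lie f_hom f_surj ker_Z2 eq_br cover.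
by case: f_hom => _ ->.
Qed.

Section OneDimensionalCenter.
Variables (F : fieldType) (L : vectType F) (br : L -> L -> L).
Hypothesis br_lie : is_lie br.

HB.instance Definition _ :=
  bilinear_isBilinear.Build F L L L *:%R *:%R br (lie_bilinear br_lie).

Lemma br_in_derived u v : br u v \in derived br.
Proof.
rewrite (coord_vbasis (memvf u)) (coord_vbasis (memvf v)) linear_sumlz /=.
apply: memv_suml => i _; rewrite linearZl linear_sumr /=; apply: memvZ.
apply: memv_suml => j _; rewrite linearZr /=; apply: memvZ.
by apply/memv_span/allpairs_f; apply: mem_nth; rewrite size_tuple.
Qed.

Hypothesis dim_gt3 : (3 < \dim {:L})%N.
Hypothesis derived_center : forall x : L, x \in derived br <-> in_center br x.
Hypothesis dim_derived : \dim (derived br) = 1%N.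

Let z := vpick (derived br).

Let z_neq0 : z != 0.
Proof. by rewrite vpick0 -dimv_eq0 dim_derived. Qed.

Let derived_line : derived br = <[z]>%VS.
Proof.
apply/eqP; rewrite eq_sym eqEdim dim_vline z_neq0 dim_derived leqnn andbT.
by rewrite -memvE memv_pick.
Qed.

Let br_line u v : exists a, br u v = a *: z.
Proof. by apply/vlineP; rewrite -derived_line br_in_derived. Qed.

Lemma noncentral_br x : x \notin <[z]>%VS -> exists y, br x y = z.
Proof.
move=> xNz; have xNcenter : ~ in_center br x.
  by rewrite -derived_center derived_line; apply/negP.
have [y /eqP bxy_neq0] := not_all_ex_not _ _ xNcenter.
have [a bxy] := br_line x y.
have a_neq0 : a != 0 by apply: contraNneq bxy_neq0 => a0; rewrite bxy a0 scale0r.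
by exists (a^-1 *: y); rewrite linearZr /= bxy scalerA mulVf // scale1r.
Qed.

Lemma centralizer_decomp x y u : br x y = z ->
  exists a b, in_centralizer br x y (u - (a *: x + b *: y)).
Proof.
move=> bxy; have [[p bxu] [q byu]] := (br_line x u, br_line y u).
exists (- q), p; split; rewrite linearBr linearDr !linearZr /= (brxx br_lie).
  by rewrite bxu bxy scaler0 add0r subrr.
by rewrite byu (brC br_lie) bxy scaler0 addr0 scaleNr scalerN opprK subrr.
Qed.

Lemma centralizer_noncentral x y : br x y = z ->
  exists2 w, in_centralizer br x y w & w \notin <[z]>%VS.
Proof.
move=> bxy; apply: NNPP => noW.
have centralizer_line w : in_centralizer br x y w -> w \in <[z]>%VS.
  by move=> cw; apply/negPn/negP => wNz; apply: noW; exists w.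
suff /dimvS : (fullv <= <<[:: z; x; y]>>)%VS.
  by move/leq_trans/(_ (dim_span _)) => /=; lia.
apply/subvP => u _; have [a [b /centralizer_line cu]] := centralizer_decomp u bxy.
rewrite -(subrK (a *: x + b *: y) u) span_cons; apply: memv_add => //.
by apply: rpredD; apply: rpredZ; apply: memv_span; rewrite !inE eqxx ?orbT.
Qed.

Lemma exists_centralizers_cover : exists x1 y1 x2 y2,
  [/\ br x1 y1 != 0, br x1 y1 = br x2 y2 & centralizers_cover br x1 y1 x2 y2].
Proof.
have [x1 _ x1Nz] : exists2 x1, x1 \in fullv & x1 \notin <[z]>%VS.
  apply/subvPn; apply: contraTN dim_gt3 => /dimvS.
  by rewrite dim_vline z_neq0 -leqNgt; lia.
have [y1 bxy1] := noncentral_br x1Nz.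
have [x2 cx2 x2Nz] := centralizer_noncentral bxy1.
have [y bx2y] := noncentral_br x2Nz.
have [a [b cy]] := centralizer_decomp y bxy1.
exists x1, y1, x2, (y - (a *: x1 + b *: y1)); split.
- by rewrite bxy1.
- by rewrite bxy1 linearBr /= bx2y (br_centralizer_lincomb br_lie _ _ cx2) subr0.
move=> u; have [c [d cu]] := centralizer_decomp u bxy1.
exists (u - (c *: x1 + d *: y1)), (c *: x1 + d *: y1); split=> //; first by rewrite subrK.
by split; apply: (br_centralizer_lincomb br_lie).
Qed.

End OneDimensionalCenter.

Theorem corollary2p9 (F : fieldType) (m : nat) (L : vectType F) (br : L -> L -> L) :
  (2 <= m)%N -> is_heisenberg br m -> ~ two_capable br.
Proof.
move=> m_ge2 [br_lie dimL derived_center dim_derived] capable.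
have dim_gt3 : (3 < \dim {:L})%N by rewrite dimL; lia.
have [x1 [y1 [x2 [y2 [bxy1_neq0 eq_br cover]]]]] :=
  exists_centralizers_cover br_lie dim_gt3 derived_center dim_derived.
by move/eqP: bxy1_neq0; apply; apply: two_capable_br_eq0 capable eq_br cover.
Qed.
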